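(* There exists a subset $\mathcal{A}\subseteq\mathbb{Z}$ which is not recursive, is closed in the profinite topology of $\mathbb{Z}$, and such that the function $n\mapsto\mathcal{A}\bmod n$ (for $n\ge1$) is recursive.
   Context: $\mathcal{A}\bmod n=\{r\in\{0,\dots,n-1\}:\exists x\in\mathcal{A},\ x\equiv r\bmod n\}$. The profinite topology on $\mathbb{Z}$ has as basis of open sets the arithmetic progressions $m+p\mathbb{Z}$ ($m\in\mathbb{Z}$, $p\ge1$). *)

From Stdlib Require Import ZArith Arith List.
Import ListNotations.

Inductive code : Type :=
| CZero : code
| CSucc : code
| CProj : nat -> code                 (* i-th argument (0 if absent) *)
| CComp : code -> list code -> code
| CPrec : code -> code -> code
| CMu   : code -> code.

Inductive eval : code -> list nat -> nat -> Prop :=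
| ev_zero : forall v, eval CZero v 0
| ev_succ : forall x v, eval CSucc (x :: v) (S x)
| ev_proj : forall i v, eval (CProj i) v (nth i v 0)
| ev_comp : forall f gs v ys y,
    eval_list gs v ys -> eval f ys y -> eval (CComp f gs) v y
| ev_prec0 : forall f g v y, eval f v y -> eval (CPrec f g) (0 :: v) y
| ev_precS : forall f g n v z y,
    eval (CPrec f g) (n :: v) z -> eval g (n :: z :: v) y ->
    eval (CPrec f g) (S n :: v) y
| ev_mu : forall f v y,
    eval f (y :: v) 0 ->
    (forall k, k < y -> exists m, eval f (k :: v) (S m)) ->
    eval (CMu f) v y
with eval_list : list code -> list nat -> list nat -> Prop :=
| evl_nil : forall v, eval_list [] v []
| evl_cons : forall g gs v y ys,
    eval g v y -> eval_list gs v ys -> eval_list (g :: gs) v (y :: ys).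

(* Standard bijective coding of Z into nat: 0,-1,1,-2,2,... -> 0,1,2,3,4,... *)
Definition z2n (z : Z) : nat :=
  if (0 <=? z)%Z then Z.to_nat (2 * z) else Z.to_nat (- 2 * z - 1).

Definition recursive_set (A : Z -> Prop) : Prop :=
  exists c : code, forall z : Z,
    (A z -> eval c [z2n z] 1) /\ (~ A z -> eval c [z2n z] 0).

Definition arith_prog (m p : Z) (x : Z) : Prop := exists k : Z, x = (m + p * k)%Z.

Definition profinite_open (U : Z -> Prop) : Prop :=
  forall x, U x -> exists m p : Z, (1 <= p)%Z /\ arith_prog m p x /\
    (forall y, arith_prog m p y -> U y).

Definition profinite_closed (A : Z -> Prop) : Prop :=
  profinite_open (fun x => ~ A x).

Definition set_mod (A : Z -> Prop) (n : nat) (r : nat) : Prop :=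
  r < n /\ exists x : Z, A x /\ (x mod Z.of_nat n)%Z = Z.of_nat r.

(* The function n |-> A mod n (n >= 1) is recursive: a total mu-recursive
   program outputs, on input n >= 1, the code sum_{r in A mod n} 2^r
   (i.e. bit r of the output is set iff r is in A mod n). *)
Definition recursive_mod_function (A : Z -> Prop) : Prop :=
  exists c : code, forall n : nat, 1 <= n ->
    exists s : nat, eval c [n] s /\
      (forall r : nat, Nat.testbit s r = true <-> set_mod A n r).

From Stdlib Require Import ZArith Arith List Lia Bool Factorial Classical.
Import ListNotations.

(* Number the codes by [enc] and let program [k] run, in a small-step
   interpreter with primitive recursive transition function, on the code of
   [(k+1)!].  The set [A] contains [0], contains [(k+1)!] if program [k] never
   returns [1], and contains [(k+1)! + (t+k+2)!] instead if it returns [1]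
   after [t] steps; a decider numbered [k] misjudges [(k+1)!].
   Modulo [n] every [m!] with [m >= n] vanishes, so [A mod n] is computed by
   running the programs [k < n] for [n] steps: a program accepting later
   contributes [(k+1)! + (t+k+2)!] with [t >= n], which is [(k+1)!] mod [n].
   Modulo [N!] with [N] large, an element of [A] is congruent to [0], to itself,
   or to [(k+1)!] with [t+k+2 >= N]; taking [N] beyond the acceptance time of
   the program [k] with [x = (k+1)!], if any, the progression [x + N! Z]
   misses [A] whenever [x] does. *)

(* Total semantics, agreeing with [eval] on the primitive recursive codes
   accepted by [primb]; the junk values on [CMu] and on empty argument lists
   of [CSucc] and [CPrec] are never reached there. *)
Fixpoint denote (c : code) (v : list nat) : nat :=
  match c with
  | CZero => 0
  | CSucc => S (hd 0 v)
  | CProj i => nth i v 0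
  | CComp f gs => denote f (map (fun g => denote g v) gs)
  | CPrec f g =>
      match v with
      | [] => 0
      | n :: w => nat_rect (fun _ => nat) (denote f w) (fun m z => denote g (m :: z :: w)) n
      end
  | CMu _ => 0
  end.

Fixpoint primb (c : code) : bool :=
  match c with
  | CZero | CProj _ => true
  | CComp f gs =>
      forallb primb gs &&
      (primb f || (match f with CSucc => true | CPrec a b => primb a && primb b | _ => false end
                   && match gs with [] => false | _ => true end))
  | _ => false
  end.

Definition prim_headb (c : code) : bool :=
  match c with CSucc => true | CPrec a b => primb a && primb b | _ => false end.

Section CodeNestedInd.
Variable P : code -> Prop.
Hypothesis HZero : P CZero.
Hypothesis HSucc : P CSucc.
Hypothesis HProj : forall i, P (CProj i).
Hypothesis HComp : forall f gs, P f -> Forall P gs -> P (CComp f gs).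
Hypothesis HPrec : forall f g, P f -> P g -> P (CPrec f g).
Hypothesis HMu : forall f, P f -> P (CMu f).

Fixpoint code_nested_ind (c : code) : P c :=
  match c with
  | CZero => HZero
  | CSucc => HSucc
  | CProj i => HProj i
  | CComp f gs => HComp f gs (code_nested_ind f)
      ((fix all (l : list code) : Forall P l :=
          match l with
          | [] => Forall_nil P
          | g :: l' => Forall_cons g (code_nested_ind g) (all l')
          end) gs)
  | CPrec f g => HPrec f g (code_nested_ind f) (code_nested_ind g)
  | CMu f => HMu f (code_nested_ind f)
  end.
End CodeNestedInd.

Lemma eval_prec_denote f g :
  (forall v, eval f v (denote f v)) -> (forall v, eval g v (denote g v)) ->
  forall n w, eval (CPrec f g) (n :: w) (denote (CPrec f g) (n :: w)).
Proof.
  intros Hf Hg n w; induction n as [|n IHn]; simpl.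
  - constructor; auto.
  - econstructor; eauto.
Qed.

Lemma eval_denote_gen c :
  (primb c = true -> forall v, eval c v (denote c v)) /\
  (prim_headb c = true -> forall n w, eval c (n :: w) (denote c (n :: w))).
Proof.
  induction c as [| |i|f gs IHf IHgs|f g IHf IHg|f IHf] using code_nested_ind;
    simpl; split; intros Hc; try discriminate.
  - constructor.
  - constructor.
  - constructor.
  - intros v. apply andb_true_iff in Hc as [Hgs Hf].
    assert (Hargs : eval_list gs v (map (fun g => denote g v) gs)).
    { clear Hf IHf. induction gs as [|g gs IH]; simpl in *; constructor.
      - apply andb_true_iff in Hgs as [Hg _]. inversion IHgs as [|? ? [IHg _]]; auto.
      - apply andb_true_iff in Hgs as [_ Hgs]. inversion IHgs; auto. }
    econstructor; [exact Hargs|].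
    apply orb_true_iff in Hf as [Hf|Hf]; [now apply IHf|].
    apply andb_true_iff in Hf as [Hf Hne]. destruct gs; [discriminate|]. simpl.
    apply IHf. destruct f; try discriminate; simpl; auto.
  - apply andb_true_iff in Hc as [Hf Hg].
    apply eval_prec_denote; [apply IHf | apply IHg]; auto.
Qed.

Lemma eval_denote c v : primb c = true -> eval c v (denote c v).
Proof. intros Hc; now apply eval_denote_gen. Qed.

Lemma denote_prec (F : nat -> nat) f g n w :
  denote f w = F 0 -> (forall m, denote g (m :: F m :: w) = F (S m)) ->
  denote (CPrec f g) (n :: w) = F n.
Proof. intros H0 HS; simpl; induction n as [|n IHn]; simpl; [|rewrite IHn]; auto. Qed.

Definition ifz (x a b : nat) : nat := match x with 0 => a | S _ => b end.
Definition absdiff (a b : nat) : nat := (a - b) + (b - a).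
Definition ifeq (x k a b : nat) : nat := ifz (absdiff x k) a b.

Lemma ifz_absdiff a b x y : ifz (absdiff a b) x y = if Nat.eqb a b then x else y.
Proof. unfold ifz, absdiff. destruct (Nat.eqb_spec a b), (a - b + (b - a)) eqn:E; auto; lia. Qed.

Ltac denote_simpl := simpl; autorewrite with denote; simpl.

Definition c_succ := CComp CSucc [CProj 0].
Lemma denote_succ x w : denote c_succ (x :: w) = S x.
Proof. reflexivity. Qed.
Global Opaque c_succ. Global Hint Rewrite denote_succ : denote.

Fixpoint c_const (n : nat) : code :=
  match n with 0 => CZero | S n => CComp c_succ [c_const n] end.
Lemma denote_const n v : denote (c_const n) v = n.
Proof. induction n as [|n IHn]; simpl; [|rewrite denote_succ, IHn]; reflexivity. Qed.
Global Hint Rewrite denote_const : denote.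

Definition c_add := CPrec (CProj 0) (CComp c_succ [CProj 1]).
Lemma denote_add x y w : denote c_add (x :: y :: w) = x + y.
Proof. apply (denote_prec (fun n => n + y)); intros; denote_simpl; reflexivity. Qed.
Global Opaque c_add. Global Hint Rewrite denote_add : denote.

Definition c_pred := CPrec CZero (CProj 0).
Lemma denote_pred x w : denote c_pred (x :: w) = pred x.
Proof. apply (denote_prec pred); reflexivity. Qed.
Global Opaque c_pred. Global Hint Rewrite denote_pred : denote.

Definition c_sub := CComp (CPrec (CProj 0) (CComp c_pred [CProj 1])) [CProj 1; CProj 0].
Lemma denote_sub a b w : denote c_sub (a :: b :: w) = a - b.
Proof. apply (denote_prec (fun n => a - n)); intros; denote_simpl; lia. Qed.
Global Opaque c_sub. Global Hint Rewrite denote_sub : denote.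

Definition c_mul := CPrec CZero (CComp c_add [CProj 1; CProj 2]).
Lemma denote_mul x y w : denote c_mul (x :: y :: w) = x * y.
Proof. apply (denote_prec (fun n => n * y)); intros; denote_simpl; lia. Qed.
Global Opaque c_mul. Global Hint Rewrite denote_mul : denote.

Definition c_ifz := CPrec (CProj 0) (CProj 3).
Lemma denote_ifz x a b w : denote c_ifz (x :: a :: b :: w) = ifz x a b.
Proof. apply (denote_prec (fun n => ifz n a b)); reflexivity. Qed.
Global Opaque c_ifz. Global Hint Rewrite denote_ifz : denote.

Definition c_absdiff :=
  CComp c_add [CComp c_sub [CProj 0; CProj 1]; CComp c_sub [CProj 1; CProj 0]].
Lemma denote_absdiff a b w : denote c_absdiff (a :: b :: w) = absdiff a b.
Proof. denote_simpl; reflexivity. Qed.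
Global Opaque c_absdiff. Global Hint Rewrite denote_absdiff : denote.

Definition c_ifeq x k a b := CComp c_ifz [CComp c_absdiff [x; c_const k]; a; b].
Lemma denote_ifeq x k a b v :
  denote (c_ifeq x k a b) v = ifeq (denote x v) k (denote a v) (denote b v).
Proof. unfold c_ifeq; denote_simpl; reflexivity. Qed.
Global Hint Rewrite denote_ifeq : denote.

Fixpoint triangle (k : nat) : nat := match k with 0 => 0 | S k => triangle k + S k end.

(* [pair_sum n] is the [k] with [triangle k <= n < triangle (S k)]. *)
Fixpoint pair_sum (n : nat) : nat :=
  match n with
  | 0 => 0
  | S m => ifz (triangle (S (pair_sum m)) - S m) (S (pair_sum m)) (pair_sum m)
  end.

Definition cpair (a b : nat) : nat := triangle (a + b) + b.
Definition unpair2 (n : nat) : nat := n - triangle (pair_sum n).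
Definition unpair1 (n : nat) : nat := pair_sum n - unpair2 n.

Definition c_triangle := CPrec CZero (CComp c_add [CProj 1; CComp c_succ [CProj 0]]).
Lemma denote_triangle k w : denote c_triangle (k :: w) = triangle k.
Proof. apply denote_prec; intros; denote_simpl; reflexivity. Qed.
Global Opaque c_triangle. Global Hint Rewrite denote_triangle : denote.

Definition c_pair_sum :=
  CPrec CZero (CComp c_ifz
    [CComp c_sub [CComp c_triangle [CComp c_succ [CProj 1]]; CComp c_succ [CProj 0]];
     CComp c_succ [CProj 1]; CProj 1]).
Lemma denote_pair_sum n w : denote c_pair_sum (n :: w) = pair_sum n.
Proof. apply denote_prec; intros; denote_simpl; reflexivity. Qed.
Global Opaque c_pair_sum. Global Hint Rewrite denote_pair_sum : denote.

Definition c_unpair2 := CComp c_sub [CProj 0; CComp c_triangle [CComp c_pair_sum [CProj 0]]].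
Lemma denote_unpair2 n w : denote c_unpair2 (n :: w) = unpair2 n.
Proof. denote_simpl; reflexivity. Qed.
Global Opaque c_unpair2. Global Hint Rewrite denote_unpair2 : denote.

Definition c_unpair1 := CComp c_sub [CComp c_pair_sum [CProj 0]; CComp c_unpair2 [CProj 0]].
Lemma denote_unpair1 n w : denote c_unpair1 (n :: w) = unpair1 n.
Proof. denote_simpl; reflexivity. Qed.
Global Opaque c_unpair1. Global Hint Rewrite denote_unpair1 : denote.

Definition c_cpair := CComp c_add [CComp c_triangle [CComp c_add [CProj 0; CProj 1]]; CProj 1].
Lemma denote_cpair a b w : denote c_cpair (a :: b :: w) = cpair a b.
Proof. denote_simpl; reflexivity. Qed.
Global Opaque c_cpair. Global Hint Rewrite denote_cpair : denote.

Lemma triangle_lt_mono k j : k < j -> triangle (S k) <= triangle j.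
Proof. induction 1; simpl in *; lia. Qed.

Lemma pair_sum_spec n : triangle (pair_sum n) <= n < triangle (S (pair_sum n)).
Proof.
  induction n as [|m IH]; [simpl; lia|].
  cbn [pair_sum]. unfold ifz. destruct (triangle (S (pair_sum m)) - S m) eqn:E; simpl in *; lia.
Qed.

Lemma pair_sum_unique n k : triangle k <= n < triangle (S k) -> pair_sum n = k.
Proof.
  intros Hk. pose proof (pair_sum_spec n).
  destruct (lt_eq_lt_dec (pair_sum n) k) as [[Hlt|Heq]|Hgt]; auto;
    [apply triangle_lt_mono in Hlt | apply triangle_lt_mono in Hgt]; lia.
Qed.

Lemma pair_sum_cpair a b : pair_sum (cpair a b) = a + b.
Proof. apply pair_sum_unique. unfold cpair; simpl; lia. Qed.

Lemma unpair2_cpair a b : unpair2 (cpair a b) = b.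
Proof. unfold unpair2. rewrite pair_sum_cpair. unfold cpair; lia. Qed.

Lemma unpair1_cpair a b : unpair1 (cpair a b) = a.
Proof. unfold unpair1. rewrite unpair2_cpair, pair_sum_cpair. lia. Qed.

Definition ncons (x l : nat) : nat := S (cpair x l).
Definition nhd (l : nat) : nat := unpair1 (pred l).
Definition ntl (l : nat) : nat := unpair2 (pred l).
Definition nnth (i l : nat) : nat := nhd (Nat.iter i ntl l).

Fixpoint enc_list (l : list nat) : nat :=
  match l with [] => 0 | x :: l => ncons x (enc_list l) end.

Lemma nhd_ncons x l : nhd (ncons x l) = x.
Proof. apply unpair1_cpair. Qed.

Lemma ntl_ncons x l : ntl (ncons x l) = l.
Proof. apply unpair2_cpair. Qed.

Lemma nnth_enc_list i v : nnth i (enc_list v) = nth i v 0.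
Proof.
  unfold nnth. revert v; induction i as [|i IHi]; intros [|x v].
  - reflexivity.
  - apply nhd_ncons.
  - enough (Hnil : Nat.iter (S i) ntl (enc_list []) = 0) by now rewrite Hnil.
    clear IHi; simpl enc_list; induction (S i) as [|n IHn]; simpl; [|rewrite IHn]; reflexivity.
  - rewrite Nat.iter_succ_r. simpl enc_list. rewrite ntl_ncons. apply IHi.
Qed.

Definition c_ncons := CComp c_succ [CComp c_cpair [CProj 0; CProj 1]].
Lemma denote_ncons x l w : denote c_ncons (x :: l :: w) = ncons x l.
Proof. denote_simpl; reflexivity. Qed.
Global Opaque c_ncons. Global Hint Rewrite denote_ncons : denote.

Definition c_nhd := CComp c_unpair1 [CComp c_pred [CProj 0]].
Lemma denote_nhd l w : denote c_nhd (l :: w) = nhd l.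
Proof. denote_simpl; reflexivity. Qed.
Global Opaque c_nhd. Global Hint Rewrite denote_nhd : denote.

Definition c_ntl := CComp c_unpair2 [CComp c_pred [CProj 0]].
Lemma denote_ntl l w : denote c_ntl (l :: w) = ntl l.
Proof. denote_simpl; reflexivity. Qed.
Global Opaque c_ntl. Global Hint Rewrite denote_ntl : denote.

Definition c_ntl_iter := CPrec (CProj 0) (CComp c_ntl [CProj 1]).
Lemma denote_ntl_iter i l w : denote c_ntl_iter (i :: l :: w) = Nat.iter i ntl l.
Proof. apply (denote_prec (fun n => Nat.iter n ntl l)); intros; denote_simpl; reflexivity. Qed.
Global Opaque c_ntl_iter. Global Hint Rewrite denote_ntl_iter : denote.

Definition c_nnth := CComp c_nhd [CComp c_ntl_iter [CProj 0; CProj 1]].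
Lemma denote_nnth i l w : denote c_nnth (i :: l :: w) = nnth i l.
Proof. denote_simpl; reflexivity. Qed.
Global Opaque c_nnth. Global Hint Rewrite denote_nnth : denote.

(* A small-step machine for [eval] with a primitive recursive transition
   function.  A state is [st_eval c v K] (run the code numbered [c] on the
   coded argument list [v]), [st_eval_list gs v K] (run each code of [gs] on
   [v]) or [st_ret y K] (hand [y] to the top frame of the stack [K]); the
   states [st_ret y 0] are final.  The frames record what remains to be done:
   the rest of an argument list, a collected head value, the outer function of
   a composition, a pending step of a primitive recursion, the current
   candidate of a minimisation. *)
Fixpoint enc (c : code) : nat :=
  match c with
  | CZero => cpair 0 0
  | CSucc => cpair 1 0
  | CProj i => cpair 2 i
  | CComp f gs => cpair 3 (cpair (enc f) (enc_list (map enc gs)))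
  | CPrec f g => cpair 4 (cpair (enc f) (enc g))
  | CMu f => cpair 5 (enc f)
  end.

Definition st_eval (c v K : nat) : nat := cpair 0 (cpair c (cpair v K)).
Definition st_eval_list (gs v K : nat) : nat := cpair 1 (cpair gs (cpair v K)).
Definition st_ret (y K : nat) : nat := cpair 2 (cpair y K).

Definition fr_args (gs v : nat) : nat := cpair 0 (cpair gs v).
Definition fr_collect (y : nat) : nat := cpair 1 y.
Definition fr_comp (f : nat) : nat := cpair 2 f.
Definition fr_prec (g m w : nat) : nat := cpair 3 (cpair g (cpair m w)).
Definition fr_mu (f w k : nat) : nat := cpair 4 (cpair f (cpair w k)).

Definition cc_cpair (a b : code) : code := CComp c_cpair [a; b].
Definition cc_unpair1 (x : code) : code := CComp c_unpair1 [x].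
Definition cc_unpair2 (x : code) : code := CComp c_unpair2 [x].
Definition cc_ncons (x l : code) : code := CComp c_ncons [x; l].
Definition cc_nhd (x : code) : code := CComp c_nhd [x].
Definition cc_ntl (x : code) : code := CComp c_ntl [x].
Definition cc_st_eval (c v K : code) : code :=
  cc_cpair (c_const 0) (cc_cpair c (cc_cpair v K)).
Definition cc_st_eval_list (gs v K : code) : code :=
  cc_cpair (c_const 1) (cc_cpair gs (cc_cpair v K)).
Definition cc_st_ret (y K : code) : code := cc_cpair (c_const 2) (cc_cpair y K).

(* [fg] is [cpair (enc f) (enc g)] for the code [c] of [CPrec f g]. *)
Definition step_prec (c v K fg : nat) : nat :=
  ifz (nhd v) (st_eval (unpair1 fg) (ntl v) K)
    (st_eval c (ncons (pred (nhd v)) (ntl v))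
       (ncons (fr_prec (unpair2 fg) (pred (nhd v)) (ntl v)) K)).
Definition c_step_prec :=
  CComp c_ifz [cc_nhd (CProj 1); cc_st_eval (cc_unpair1 (CProj 3)) (cc_ntl (CProj 1)) (CProj 2);
    cc_st_eval (CProj 0) (cc_ncons (CComp c_pred [cc_nhd (CProj 1)]) (cc_ntl (CProj 1)))
      (cc_ncons (cc_cpair (c_const 3) (cc_cpair (cc_unpair2 (CProj 3))
                   (cc_cpair (CComp c_pred [cc_nhd (CProj 1)]) (cc_ntl (CProj 1)))))
         (CProj 2))].
Lemma denote_step_prec c v K fg w :
  denote c_step_prec (c :: v :: K :: fg :: w) = step_prec c v K fg.
Proof. unfold c_step_prec; denote_simpl; reflexivity. Qed.
Global Opaque c_step_prec. Global Hint Rewrite denote_step_prec : denote.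

Definition step_eval_code (c v K tag arg : nat) : nat :=
  ifz tag (st_ret 0 K)
  (ifeq tag 1 (st_ret (S (nhd v)) K)
  (ifeq tag 2 (st_ret (nnth arg v) K)
  (ifeq tag 3 (st_eval_list (unpair2 arg) v (ncons (fr_comp (unpair1 arg)) K))
  (ifeq tag 4 (step_prec c v K arg)
     (st_eval arg (ncons 0 v) (ncons (fr_mu arg v 0) K)))))).
Definition c_step_eval_code :=
  CComp c_ifz [CProj 3; cc_st_ret (c_const 0) (CProj 2);
  c_ifeq (CProj 3) 1 (cc_st_ret (CComp c_succ [cc_nhd (CProj 1)]) (CProj 2))
  (c_ifeq (CProj 3) 2 (cc_st_ret (CComp c_nnth [CProj 4; CProj 1]) (CProj 2))
  (c_ifeq (CProj 3) 3 (cc_st_eval_list (cc_unpair2 (CProj 4)) (CProj 1)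
                         (cc_ncons (cc_cpair (c_const 2) (cc_unpair1 (CProj 4))) (CProj 2)))
  (c_ifeq (CProj 3) 4 (CComp c_step_prec [CProj 0; CProj 1; CProj 2; CProj 4])
     (cc_st_eval (CProj 4) (cc_ncons (c_const 0) (CProj 1))
        (cc_ncons (cc_cpair (c_const 4) (cc_cpair (CProj 4) (cc_cpair (CProj 1) (c_const 0))))
           (CProj 2))))))].
Lemma denote_step_eval_code c v K tag arg w :
  denote c_step_eval_code (c :: v :: K :: tag :: arg :: w) = step_eval_code c v K tag arg.
Proof. unfold c_step_eval_code; denote_simpl; reflexivity. Qed.
Global Opaque c_step_eval_code. Global Hint Rewrite denote_step_eval_code : denote.

Definition step_eval (r : nat) : nat :=
  step_eval_code (unpair1 r) (unpair1 (unpair2 r)) (unpair2 (unpair2 r))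
    (unpair1 (unpair1 r)) (unpair2 (unpair1 r)).
Definition c_step_eval :=
  CComp c_step_eval_code
    [cc_unpair1 (CProj 0); cc_unpair1 (cc_unpair2 (CProj 0)); cc_unpair2 (cc_unpair2 (CProj 0));
     cc_unpair1 (cc_unpair1 (CProj 0)); cc_unpair2 (cc_unpair1 (CProj 0))].
Lemma denote_step_eval r w : denote c_step_eval (r :: w) = step_eval r.
Proof. unfold c_step_eval; denote_simpl; reflexivity. Qed.
Global Opaque c_step_eval. Global Hint Rewrite denote_step_eval : denote.

Definition step_eval_list (r : nat) : nat :=
  let gs := unpair1 r in let v := unpair1 (unpair2 r) in let K := unpair2 (unpair2 r) in
  ifz gs (st_ret 0 K) (st_eval (nhd gs) v (ncons (fr_args (ntl gs) v) K)).
Definition c_step_eval_list :=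
  CComp (CComp c_ifz [CProj 0; cc_st_ret (c_const 0) (CProj 2);
           cc_st_eval (cc_nhd (CProj 0)) (CProj 1)
             (cc_ncons (cc_cpair (c_const 0) (cc_cpair (cc_ntl (CProj 0)) (CProj 1))) (CProj 2))])
     [cc_unpair1 (CProj 0); cc_unpair1 (cc_unpair2 (CProj 0)); cc_unpair2 (cc_unpair2 (CProj 0))].
Lemma denote_step_eval_list r w : denote c_step_eval_list (r :: w) = step_eval_list r.
Proof. unfold c_step_eval_list; denote_simpl; reflexivity. Qed.
Global Opaque c_step_eval_list. Global Hint Rewrite denote_step_eval_list : denote.

Definition step_mu (y f w k K : nat) : nat :=
  ifz y (st_ret k K) (st_eval f (ncons (S k) w) (ncons (fr_mu f w (S k)) K)).
Definition c_step_mu :=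
  CComp c_ifz [CProj 0; cc_st_ret (CProj 3) (CProj 4);
    cc_st_eval (CProj 1) (cc_ncons (CComp c_succ [CProj 3]) (CProj 2))
      (cc_ncons (cc_cpair (c_const 4) (cc_cpair (CProj 1) (cc_cpair (CProj 2)
                   (CComp c_succ [CProj 3])))) (CProj 4))].
Lemma denote_step_mu y f w k K l :
  denote c_step_mu (y :: f :: w :: k :: K :: l) = step_mu y f w k K.
Proof. unfold c_step_mu; denote_simpl; reflexivity. Qed.
Global Opaque c_step_mu. Global Hint Rewrite denote_step_mu : denote.

Definition step_frame (y tag arg K : nat) : nat :=
  ifz tag (st_eval_list (unpair1 arg) (unpair2 arg) (ncons (fr_collect y) K))
  (ifeq tag 1 (st_ret (ncons arg y) K)
  (ifeq tag 2 (st_eval arg y K)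
  (ifeq tag 3 (st_eval (unpair1 arg)
                 (ncons (unpair1 (unpair2 arg)) (ncons y (unpair2 (unpair2 arg)))) K)
     (step_mu y (unpair1 arg) (unpair1 (unpair2 arg)) (unpair2 (unpair2 arg)) K)))).
Definition c_step_frame :=
  CComp c_ifz [CProj 1; cc_st_eval_list (cc_unpair1 (CProj 2)) (cc_unpair2 (CProj 2))
                         (cc_ncons (cc_cpair (c_const 1) (CProj 0)) (CProj 3));
  c_ifeq (CProj 1) 1 (cc_st_ret (cc_ncons (CProj 2) (CProj 0)) (CProj 3))
  (c_ifeq (CProj 1) 2 (cc_st_eval (CProj 2) (CProj 0) (CProj 3))
  (c_ifeq (CProj 1) 3 (cc_st_eval (cc_unpair1 (CProj 2))
                         (cc_ncons (cc_unpair1 (cc_unpair2 (CProj 2)))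
                            (cc_ncons (CProj 0) (cc_unpair2 (cc_unpair2 (CProj 2))))) (CProj 3))
     (CComp c_step_mu [CProj 0; cc_unpair1 (CProj 2); cc_unpair1 (cc_unpair2 (CProj 2));
                       cc_unpair2 (cc_unpair2 (CProj 2)); CProj 3])))].
Lemma denote_step_frame y tag arg K l :
  denote c_step_frame (y :: tag :: arg :: K :: l) = step_frame y tag arg K.
Proof. unfold c_step_frame; denote_simpl; reflexivity. Qed.
Global Opaque c_step_frame. Global Hint Rewrite denote_step_frame : denote.

Definition step (s : nat) : nat :=
  let r := unpair2 s in
  ifz (unpair1 s) (step_eval r)
  (ifeq (unpair1 s) 1 (step_eval_list r)
  (ifz (unpair2 r) s
     (step_frame (unpair1 r) (unpair1 (nhd (unpair2 r))) (unpair2 (nhd (unpair2 r)))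
        (ntl (unpair2 r))))).
Definition c_step :=
  CComp c_ifz [cc_unpair1 (CProj 0); CComp c_step_eval [cc_unpair2 (CProj 0)];
   c_ifeq (cc_unpair1 (CProj 0)) 1 (CComp c_step_eval_list [cc_unpair2 (CProj 0)])
     (CComp c_ifz [cc_unpair2 (cc_unpair2 (CProj 0)); CProj 0;
        CComp c_step_frame [cc_unpair1 (cc_unpair2 (CProj 0));
                            cc_unpair1 (cc_nhd (cc_unpair2 (cc_unpair2 (CProj 0))));
                            cc_unpair2 (cc_nhd (cc_unpair2 (cc_unpair2 (CProj 0))));
                            cc_ntl (cc_unpair2 (cc_unpair2 (CProj 0)))]])].
Lemma denote_step s w : denote c_step (s :: w) = step s.
Proof. unfold c_step; denote_simpl; reflexivity. Qed.
Global Opaque c_step. Global Hint Rewrite denote_step : denote.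

Definition run (s n : nat) : nat := Nat.iter n step s.
Definition c_run := CPrec (CProj 0) (CComp c_step [CProj 1]).
Lemma denote_run n s w : denote c_run (n :: s :: w) = run s n.
Proof. apply (denote_prec (run s)); intros; denote_simpl; reflexivity. Qed.
Global Opaque c_run. Global Hint Rewrite denote_run : denote.

Lemma run_add s a b : run s (a + b) = run (run s a) b.
Proof. unfold run. rewrite Nat.add_comm. apply Nat.iter_add. Qed.

Definition reaches (s s' : nat) : Prop := exists n, run s n = s'.

Lemma reaches_refl s : reaches s s.
Proof. now exists 0. Qed.

Lemma reaches_trans a b c : reaches a b -> reaches b c -> reaches a c.
Proof. intros [n Hn] [m Hm]. exists (n + m). now rewrite run_add, Hn. Qed.

Lemma reaches_step a b c : step a = b -> reaches b c -> reaches a c.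
Proof. intros Hab [m Hm]. exists (1 + m). now rewrite run_add; simpl; rewrite Hab. Qed.

Global Opaque cpair.
Ltac step_unfold :=
  unfold step, step_eval, step_eval_code, step_eval_list, step_frame, step_mu, step_prec,
    st_eval, st_eval_list, st_ret, fr_args, fr_collect, fr_comp, fr_prec, fr_mu;
  repeat (rewrite ?unpair1_cpair, ?unpair2_cpair, ?nhd_ncons, ?ntl_ncons; simpl).

Lemma eval_reaches :
  forall c v y, eval c v y ->
    forall K, reaches (st_eval (enc c) (enc_list v) K) (st_ret y K)
with eval_list_reaches :
  forall gs v ys, eval_list gs v ys ->
    forall K, reaches (st_eval_list (enc_list (map enc gs)) (enc_list v) K)
                      (st_ret (enc_list ys) K).
Proof.
  - intros c v y d K.
    destruct d as [v|x v|i v|f gs v ys y Hl Hf|f g v y Hf|f g n v z y Hp Hg|f v y H0 Hlt].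
    + eapply reaches_step; [step_unfold; reflexivity | apply reaches_refl].
    + eapply reaches_step; [step_unfold; reflexivity | apply reaches_refl].
    + eapply reaches_step; [step_unfold; rewrite nnth_enc_list; reflexivity | apply reaches_refl].
    + eapply reaches_step; [step_unfold; reflexivity|].
      eapply reaches_trans; [exact (eval_list_reaches _ _ _ Hl _)|].
      eapply reaches_step; [step_unfold; reflexivity|]. exact (eval_reaches _ _ _ Hf _).
    + eapply reaches_step; [step_unfold; reflexivity|]. exact (eval_reaches _ _ _ Hf _).
    + eapply reaches_step; [step_unfold; reflexivity|].
      eapply reaches_trans; [exact (eval_reaches _ _ _ Hp _)|].
      eapply reaches_step; [step_unfold; reflexivity|]. exact (eval_reaches _ _ _ Hg _).
    + (* the candidates [y - j] are tried for [j = y, y - 1, ..., 0] *)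
      assert (Hcand : forall j, j <= y ->
        reaches (st_eval (enc f) (enc_list ((y - j) :: v))
                   (ncons (fr_mu (enc f) (enc_list v) (y - j)) K))
                (st_ret y K)).
      { intros j; induction j as [|j IHj]; intros Hj.
        - rewrite Nat.sub_0_r. eapply reaches_trans; [exact (eval_reaches _ _ _ H0 _)|].
          eapply reaches_step; [step_unfold; reflexivity | apply reaches_refl].
        - destruct (Hlt (y - S j) ltac:(lia)) as [m Hm].
          eapply reaches_trans; [exact (eval_reaches _ _ _ Hm _)|].
          eapply reaches_step; [step_unfold; reflexivity|].
          replace (S (y - S j)) with (y - j) by lia. apply IHj. lia. }
      eapply reaches_step; [step_unfold; reflexivity|].
      specialize (Hcand y (le_n _)). now rewrite Nat.sub_diag in Hcand.
  - intros gs v ys d K. destruct d as [v|g gs v y ys Hg Hl].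
    + eapply reaches_step; [step_unfold; reflexivity | apply reaches_refl].
    + eapply reaches_step; [step_unfold; reflexivity|].
      eapply reaches_trans; [exact (eval_reaches _ _ _ Hg _)|].
      eapply reaches_step; [step_unfold; reflexivity|].
      eapply reaches_trans; [exact (eval_list_reaches _ _ _ Hl _)|].
      eapply reaches_step; [step_unfold; reflexivity | apply reaches_refl].
Qed.

Lemma step_final y : step (st_ret y 0) = st_ret y 0.
Proof. step_unfold. reflexivity. Qed.

Lemma run_final y n : run (st_ret y 0) n = st_ret y 0.
Proof.
  induction n as [|n IHn]; [reflexivity|].
  unfold run in *; simpl. now rewrite IHn, step_final.
Qed.

Lemma run_stays_final s y a b : run s a = st_ret y 0 -> a <= b -> run s b = st_ret y 0.
Proof. intros Ha Hab. replace b with (a + (b - a)) by lia. now rewrite run_add, Ha, run_final. Qed.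

Lemma st_ret_inj y y' : st_ret y 0 = st_ret y' 0 -> y = y'.
Proof.
  unfold st_ret. intros H. apply (f_equal (fun s => unpair1 (unpair2 s))) in H.
  now rewrite !unpair2_cpair, !unpair1_cpair in H.
Qed.

Definition c_fact := CPrec (c_const 1) (CComp c_mul [CComp c_succ [CProj 0]; CProj 1]).
Lemma denote_fact n w : denote c_fact (n :: w) = fact n.
Proof. apply denote_prec; intros; denote_simpl; reflexivity. Qed.
Global Opaque c_fact. Global Hint Rewrite denote_fact : denote.

Definition c_pow2 := CPrec (c_const 1) (CComp c_mul [c_const 2; CProj 1]).
Lemma denote_pow2 n w : denote c_pow2 (n :: w) = 2 ^ n.
Proof. apply (denote_prec (fun n => 2 ^ n)); intros; denote_simpl; reflexivity. Qed.
Global Opaque c_pow2. Global Hint Rewrite denote_pow2 : denote.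

(* Program [k] started on the code [z2n (fact (S k))] of [fact (S k)]. *)
Definition diag_start (k : nat) : nat := st_eval k (ncons (2 * fact (S k)) 0) 0.
Definition c_diag_start :=
  cc_st_eval (CProj 0) (cc_ncons (CComp c_mul [c_const 2; CComp c_fact [CComp c_succ [CProj 0]]])
                          (c_const 0)) (c_const 0).
Lemma denote_diag_start k w : denote c_diag_start (k :: w) = diag_start k.
Proof. unfold c_diag_start; denote_simpl; reflexivity. Qed.
Global Opaque c_diag_start. Global Hint Rewrite denote_diag_start : denote.

Definition accepts (k s : nat) : Prop := run (diag_start k) s = st_ret 1 0.

Definition accepts_within (k s : nat) : nat :=
  ifz (absdiff (run (diag_start k) s) (st_ret 1 0)) 1 0.
Definition c_accepts_within :=
  CComp c_ifz [CComp c_absdiff [CComp c_run [CProj 1; CComp c_diag_start [CProj 0]];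
                                cc_st_ret (c_const 1) (c_const 0)];
               c_const 1; c_const 0].
Lemma denote_accepts_within k s w : denote c_accepts_within (k :: s :: w) = accepts_within k s.
Proof. unfold c_accepts_within; denote_simpl; reflexivity. Qed.
Global Opaque c_accepts_within. Global Hint Rewrite denote_accepts_within : denote.

(* Equal to [n] before program [k] accepts, and to its acceptance time afterwards. *)
Fixpoint halt_clock (k n : nat) : nat :=
  match n with 0 => 0 | S m => halt_clock k m + (1 - accepts_within k m) end.
Definition c_halt_clock :=
  CPrec CZero (CComp c_add
    [CProj 1; CComp c_sub [c_const 1; CComp c_accepts_within [CProj 2; CProj 0]]]).
Lemma denote_halt_clock n k w : denote c_halt_clock (n :: k :: w) = halt_clock k n.
Proof. apply (denote_prec (halt_clock k)); intros; denote_simpl; reflexivity. Qed.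
Global Opaque c_halt_clock. Global Hint Rewrite denote_halt_clock : denote.

(* The element of [A] contributed by program [k], as known after [n] steps. *)
Definition approx_elt (k n : nat) : nat :=
  fact (S k) + ifz (accepts_within k n) 0 (fact (halt_clock k n + k + 2)).
Definition c_approx_elt :=
  CComp c_add [CComp c_fact [CComp c_succ [CProj 0]];
    CComp c_ifz [CComp c_accepts_within [CProj 0; CProj 1]; c_const 0;
      CComp c_fact [CComp c_add [CComp c_add [CComp c_halt_clock [CProj 1; CProj 0]; CProj 0];
                                 c_const 2]]]].
Lemma denote_approx_elt k n w : denote c_approx_elt (k :: n :: w) = approx_elt k n.
Proof. unfold c_approx_elt; denote_simpl; reflexivity. Qed.
Global Opaque c_approx_elt. Global Hint Rewrite denote_approx_elt : denote.

Fixpoint nmod (a n : nat) : nat :=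
  match a with 0 => 0 | S a => ifz (absdiff (S (nmod a n)) n) 0 (S (nmod a n)) end.
Definition c_nmod :=
  CPrec CZero (CComp c_ifz [CComp c_absdiff [CComp c_succ [CProj 1]; CProj 2];
                            c_const 0; CComp c_succ [CProj 1]]).
Lemma denote_nmod a n w : denote c_nmod (a :: n :: w) = nmod a n.
Proof. apply (denote_prec (fun a => nmod a n)); intros; denote_simpl; reflexivity. Qed.
Global Opaque c_nmod. Global Hint Rewrite denote_nmod : denote.

Fixpoint residue_hits (r n m : nat) : nat :=
  match m with
  | 0 => 0
  | S k => residue_hits r n k + ifz (absdiff (nmod (approx_elt k n) n) r) 1 0
  end.
Definition c_residue_hits :=
  CPrec CZero (CComp c_add [CProj 1;
    CComp c_ifz [CComp c_absdiff [CComp c_nmod [CComp c_approx_elt [CProj 0; CProj 3]; CProj 3];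
                                  CProj 2]; c_const 1; c_const 0]]).
Lemma denote_residue_hits m r n w : denote c_residue_hits (m :: r :: n :: w) = residue_hits r n m.
Proof. apply (denote_prec (residue_hits r n)); intros; denote_simpl; reflexivity. Qed.
Global Opaque c_residue_hits. Global Hint Rewrite denote_residue_hits : denote.

Definition in_mod_set (r n : nat) : nat := ifz r 1 (ifz (residue_hits r n n) 0 1).
Definition c_in_mod_set :=
  CComp c_ifz [CProj 0; c_const 1;
               CComp c_ifz [CComp c_residue_hits [CProj 1; CProj 0; CProj 1];
                            c_const 0; c_const 1]].
Lemma denote_in_mod_set r n w : denote c_in_mod_set (r :: n :: w) = in_mod_set r n.
Proof. unfold c_in_mod_set; denote_simpl; reflexivity. Qed.
Global Opaque c_in_mod_set. Global Hint Rewrite denote_in_mod_set : denote.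

Fixpoint mod_set_bits (n m : nat) : nat :=
  match m with 0 => 0 | S r => mod_set_bits n r + in_mod_set r n * 2 ^ r end.
Definition c_mod_set_bits :=
  CPrec CZero (CComp c_add [CProj 1; CComp c_mul [CComp c_in_mod_set [CProj 0; CProj 2];
                                                  CComp c_pow2 [CProj 0]]]).
Lemma denote_mod_set_bits m n w : denote c_mod_set_bits (m :: n :: w) = mod_set_bits n m.
Proof. apply (denote_prec (mod_set_bits n)); intros; denote_simpl; reflexivity. Qed.
Global Opaque c_mod_set_bits. Global Hint Rewrite denote_mod_set_bits : denote.

Definition c_mod_set := CComp c_mod_set_bits [CProj 0; CProj 0].

Lemma eval_mod_set n : eval c_mod_set [n] (mod_set_bits n n).
Proof.
  replace (mod_set_bits n n) with (denote c_mod_set [n]) by (unfold c_mod_set; now denote_simpl).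
  apply eval_denote. vm_compute. reflexivity.
Qed.

Lemma accepts_within_true k s : accepts k s -> accepts_within k s = 1.
Proof.
  unfold accepts_within, accepts. rewrite ifz_absdiff.
  now destruct (Nat.eqb_spec (run (diag_start k) s) (st_ret 1 0)).
Qed.

Lemma accepts_within_false k s : ~ accepts k s -> accepts_within k s = 0.
Proof.
  unfold accepts_within, accepts. rewrite ifz_absdiff.
  now destruct (Nat.eqb_spec (run (diag_start k) s) (st_ret 1 0)).
Qed.

Lemma accepts_dec k s : {accepts k s} + {~ accepts k s}.
Proof. apply Nat.eq_dec. Qed.

Lemma accepts_mono k s s' : accepts k s -> s <= s' -> accepts k s'.
Proof. apply run_stays_final. Qed.

Lemma halt_clock_stable k N N' :
  accepts k N -> accepts k N' -> halt_clock k N' = halt_clock k N.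
Proof.
  assert (Hstable : forall M M', M <= M' -> accepts k M -> halt_clock k M' = halt_clock k M).
  { intros M M' HM HaccM. induction HM as [|m Hm IH]; auto. simpl.
    now rewrite IH, accepts_within_true by now apply (accepts_mono k M). }
  intros HN HN'. destruct (le_ge_dec N N'); [|symmetry]; auto.
Qed.

Lemma halt_clock_mono k a b : a <= b -> halt_clock k a <= halt_clock k b.
Proof. induction 1; simpl; lia. Qed.

Lemma halt_clock_before k n : (forall s, s < n -> ~ accepts k s) -> halt_clock k n = n.
Proof.
  induction n as [|n IHn]; intros H; simpl; auto.
  rewrite IHn, accepts_within_false by auto. lia.
Qed.

Lemma halt_clock_gt k n N : ~ accepts k n -> accepts k N -> n < halt_clock k N.
Proof.
  intros Hn HN.
  assert (HnN : n < N).
  { destruct (le_lt_dec N n) as [Hle|]; auto. now pose proof (accepts_mono _ _ _ HN Hle). }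
  assert (Hclock : halt_clock k (S n) = S n).
  { apply halt_clock_before. intros s Hs Hacc. apply Hn, (accepts_mono _ _ _ Hacc). lia. }
  pose proof (halt_clock_mono k (S n) N HnN). lia.
Qed.

Lemma nmod_spec a n : 1 <= n -> nmod a n = a mod n.
Proof.
  intros Hn. induction a as [|a IHa]; simpl.
  - symmetry; apply Nat.Div0.mod_0_l.
  - rewrite IHa, ifz_absdiff.
    pose proof (Nat.div_mod_eq a n). pose proof (Nat.mod_upper_bound a n ltac:(lia)).
    destruct (Nat.eqb_spec (S (a mod n)) n).
    + apply (Nat.mod_unique _ _ (a / n + 1)); lia.
    + apply (Nat.mod_unique _ _ (a / n)); lia.
Qed.

Lemma residue_hits_pos r n m :
  residue_hits r n m <> 0 <-> exists k, k < m /\ nmod (approx_elt k n) n = r.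
Proof.
  induction m as [|m IHm]; simpl.
  - split; [lia|]. intros [k [Hk _]]; lia.
  - rewrite ifz_absdiff. destruct (Nat.eqb_spec (nmod (approx_elt m n) n) r).
    + split; [intros _; exists m; auto | lia].
    + rewrite Nat.add_0_r, IHm. split; intros [k [Hk Hr]]; exists k; split; auto.
      assert (k <> m) by congruence. lia.
Qed.

Lemma in_mod_set_spec r n :
  (in_mod_set r n = 1 <-> r = 0 \/ exists k, k < n /\ nmod (approx_elt k n) n = r) /\
  in_mod_set r n <= 1.
Proof.
  unfold in_mod_set. destruct r as [|r]; simpl; [split; [tauto | lia]|].
  pose proof (residue_hits_pos (S r) n n) as Hhits.
  destruct (residue_hits (S r) n n); simpl; split; try lia.
  - split; [lia|]. intros [|Hex]; [lia|]. apply Hhits in Hex. lia.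
  - split; auto. intros _. right. apply Hhits. lia.
Qed.

Lemma mod_set_bits_lt n m : mod_set_bits n m < 2 ^ m.
Proof.
  induction m as [|m IHm]; simpl; [lia|].
  pose proof (proj2 (in_mod_set_spec m n)). nia.
Qed.

Lemma mod_set_bits_split n m r :
  r < m -> exists h, mod_set_bits n m = mod_set_bits n r + (in_mod_set r n + 2 * h) * 2 ^ r.
Proof.
  induction m as [|m IHm]; intros Hr; [lia|]. simpl.
  destruct (Nat.eq_dec r m) as [->|Hne]; [exists 0; lia|].
  destruct (IHm ltac:(lia)) as [h Hh]. rewrite Hh.
  exists (h + in_mod_set m n * 2 ^ (m - r - 1)).
  replace (2 ^ m) with (2 ^ (m - r - 1) * 2 ^ 1 * 2 ^ r); [simpl; ring|].
  rewrite <- !Nat.pow_add_r. f_equal. lia.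
Qed.

Lemma testbit_mod_set_bits n m r :
  Nat.testbit (mod_set_bits n m) r = true <-> r < m /\ in_mod_set r n = 1.
Proof.
  destruct (le_lt_dec m r) as [Hle|Hlt].
  - split; [|lia]. intros H. exfalso.
    apply Nat.testbit_true in H. rewrite Nat.div_small in H; [discriminate|].
    pose proof (mod_set_bits_lt n m). pose proof (Nat.pow_le_mono_r 2 m r ltac:(lia) Hle). lia.
  - destruct (mod_set_bits_split n m r Hlt) as [h Hh].
    pose proof (proj2 (in_mod_set_spec r n)).
    assert (Hbit : Nat.testbit (mod_set_bits n m) r = Nat.eqb (in_mod_set r n) 1).
    { apply (Nat.testbit_unique _ _ _ (mod_set_bits n r) h); [apply mod_set_bits_lt|].
      rewrite Hh. destruct (in_mod_set r n) as [|[|]]; simpl; lia. }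
    rewrite Hbit, Nat.eqb_eq. tauto.
Qed.

Lemma fact_divide_fact a b : a <= b -> Nat.divide (fact a) (fact b).
Proof.
  induction 1 as [|b Hab IH]; [apply Nat.divide_refl|].
  simpl. apply Nat.divide_add_r; [|apply Nat.divide_mul_r]; exact IH.
Qed.

Lemma divide_fact n m : 1 <= n -> n <= m -> Nat.divide n (fact m).
Proof.
  intros Hn Hnm. destruct n as [|n]; [lia|].
  apply Nat.divide_trans with (fact (S n)); [|now apply fact_divide_fact].
  exists (fact n). simpl. lia.
Qed.

Lemma mod_add_fact a n M : 1 <= n -> n <= M -> (a + fact M) mod n = a mod n.
Proof.
  intros Hn HnM. destruct (divide_fact n M Hn HnM) as [q ->]. apply Nat.Div0.mod_add.
Qed.

Lemma fact_mod n M : 1 <= n -> n <= M -> fact M mod n = 0.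
Proof. intros Hn HnM. destruct (divide_fact n M Hn HnM) as [q ->]. apply Nat.Div0.mod_mul. Qed.

Lemma fact_S_lt a b : a < b -> fact (S a) < fact (S b).
Proof.
  induction 1 as [|b Hab IH]; cbn [fact] in *.
  - pose proof (lt_O_fact a). nia.
  - pose proof (lt_O_fact b). nia.
Qed.

Lemma fact_S_inj a b : fact (S a) = fact (S b) -> a = b.
Proof.
  intros H. destruct (lt_eq_lt_dec a b) as [[Hlt|]|Hlt]; auto;
    apply fact_S_lt in Hlt; lia.
Qed.

Lemma fact_add_fact_neq j T k : S j < T -> fact (S j) + fact T <> fact (S k).
Proof.
  intros HT. pose proof (fact_S_lt j (pred T) ltac:(lia)) as Hlt.
  replace (S (pred T)) with T in Hlt by lia.
  destruct (le_lt_dec (S k) T) as [HkT|HTk].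
  - pose proof (fact_le _ _ HkT). pose proof (lt_O_fact (S j)). lia.
  - pose proof (fact_le (S T) (S k) ltac:(lia)). cbn [fact] in *. nia.
Qed.

Lemma fact_multiple N m : N <= m -> exists t, fact m = fact N * t.
Proof. intros HNm. destruct (fact_divide_fact N m HNm) as [t ->]. exists t. lia. Qed.

Definition diag_nat (a : nat) : Prop :=
  a = 0 \/
  (exists k, a = fact (S k) /\ forall s, ~ accepts k s) \/
  (exists k N, accepts k N /\ a = fact (S k) + fact (halt_clock k N + k + 2)).

Definition diag_set (x : Z) : Prop := exists a, x = Z.of_nat a /\ diag_nat a.

Lemma diag_nat_fact k : diag_nat (fact (S k)) <-> forall s, ~ accepts k s.
Proof.
  split.
  - intros [H|[[k' [Hk' Hnot]]|[j [N [HjN Hsum]]]]].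
    + pose proof (lt_O_fact (S k)). lia.
    + apply fact_S_inj in Hk'. now subst.
    + exfalso. symmetry in Hsum. revert Hsum. apply fact_add_fact_neq. lia.
  - intros H. right; left. eauto.
Qed.

Theorem diag_set_not_recursive : ~ recursive_set diag_set.
Proof.
  intros [c Hc]. set (k := enc c).
  assert (Hinput : z2n (Z.of_nat (fact (S k))) = 2 * fact (S k)).
  { unfold z2n. pose proof (lt_O_fact (S k)).
    destruct (Z.leb_spec 0 (Z.of_nat (fact (S k)))); lia. }
  assert (Hrun : forall y, eval c [2 * fact (S k)] y -> exists n, run (diag_start k) n = st_ret y 0)
    by (intros y Hy; apply (eval_reaches _ _ _ Hy 0)).
  specialize (Hc (Z.of_nat (fact (S k)))). rewrite Hinput in Hc.
  assert (Hmem : diag_set (Z.of_nat (fact (S k))) <-> forall s, ~ accepts k s).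
  { rewrite <- diag_nat_fact. split; [|now exists (fact (S k))].
    intros [a [Ha Hda]]. apply Nat2Z.inj in Ha. now subst. }
  destruct (classic (diag_set (Z.of_nat (fact (S k))))) as [HA|HA].
  - destruct (Hrun 1 (proj1 Hc HA)) as [n Hn]. exact (proj1 Hmem HA n Hn).
  - destruct (Hrun 0 (proj2 Hc HA)) as [n0 Hn0].
    rewrite Hmem in HA. apply not_all_not_ex in HA as [s Hs].
    pose proof (run_stays_final _ _ _ (max n0 s) Hn0 ltac:(lia)) as H0.
    pose proof (run_stays_final _ _ _ (max n0 s) Hs ltac:(lia)) as H1.
    rewrite H0 in H1. now apply st_ret_inj in H1.
Qed.

Lemma approx_elt_accepted k n :
  accepts k n -> approx_elt k n = fact (S k) + fact (halt_clock k n + k + 2).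
Proof. intros H. unfold approx_elt. now rewrite accepts_within_true. Qed.

Lemma approx_elt_pending k n : ~ accepts k n -> approx_elt k n = fact (S k).
Proof. intros H. unfold approx_elt. rewrite accepts_within_false by auto. simpl. lia. Qed.

Lemma diag_nat_mod_approx n a :
  1 <= n -> diag_nat a -> a mod n = 0 \/ exists k, k < n /\ approx_elt k n mod n = a mod n.
Proof.
  intros Hn [->|[[k [-> Hk]]|[k [N [HkN ->]]]]].
  - left. apply Nat.Div0.mod_0_l.
  - destruct (le_lt_dec n (S k)) as [Hnk|Hkn]; [left; now apply fact_mod|].
    right. exists k. split; [lia|]. now rewrite approx_elt_pending.
  - destruct (le_lt_dec n (S k)) as [Hnk|Hkn].
    { left. rewrite mod_add_fact by lia. now apply fact_mod. }
    right. exists k. split; [lia|]. destruct (accepts_dec k n) as [Hacc|Hpend].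
    + now rewrite approx_elt_accepted, (halt_clock_stable k N n).
    + rewrite approx_elt_pending, mod_add_fact; auto.
      pose proof (halt_clock_gt k n N Hpend HkN). lia.
Qed.

Lemma approx_mod_diag_nat n k :
  1 <= n -> exists a, diag_nat a /\ a mod n = approx_elt k n mod n.
Proof.
  intros Hn. destruct (accepts_dec k n) as [Hacc|Hpend].
  - exists (approx_elt k n). split; auto. right; right. exists k, n.
    split; auto. now apply approx_elt_accepted.
  - rewrite approx_elt_pending by auto.
    destruct (classic (exists N, accepts k N)) as [[N HN]|Hnever].
    + exists (fact (S k) + fact (halt_clock k N + k + 2)). split; [right; right; eauto|].
      apply mod_add_fact; auto. pose proof (halt_clock_gt k n N Hpend HN). lia.
    + exists (fact (S k)). split; auto. right; left. exists k. split; eauto.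
Qed.

Lemma set_mod_diag_set n r : 1 <= n -> set_mod diag_set n r <-> r < n /\ in_mod_set r n = 1.
Proof.
  intros Hn. rewrite (proj1 (in_mod_set_spec r n)). unfold set_mod, diag_set.
  assert (Hiff : (exists a, diag_nat a /\ a mod n = r) <->
                 r = 0 \/ exists k, k < n /\ nmod (approx_elt k n) n = r).
  { setoid_rewrite nmod_spec; auto. split.
    - intros [a [Ha <-]]. destruct (diag_nat_mod_approx n a Hn Ha) as [->|]; auto.
    - intros [->|[k [Hk <-]]].
      + exists 0. split; [now left | apply Nat.Div0.mod_0_l].
      + now apply approx_mod_diag_nat. }
  rewrite <- Hiff. split.
  - intros [Hr [x [[a [-> Ha]] Hx]]]. split; auto. exists a. split; auto.
    rewrite <- Nat2Z.inj_mod in Hx. lia.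
  - intros [Hr [a [Ha Hx]]]. split; auto. exists (Z.of_nat a). split; [eauto|].
    rewrite <- Nat2Z.inj_mod. lia.
Qed.

Theorem diag_set_mod_recursive : recursive_mod_function diag_set.
Proof.
  exists c_mod_set. intros n Hn. exists (mod_set_bits n n). split; [apply eval_mod_set|].
  intros r. rewrite testbit_mod_set_bits, set_mod_diag_set; tauto.
Qed.

Lemma Z_congr_small (x s P q : Z) : (Z.abs x + Z.abs s < P)%Z -> x = (s + P * q)%Z -> x = s.
Proof. intros Hsmall ->. destruct (Z.lt_trichotomy q 0) as [|[->|]]; nia. Qed.

(* The point is [Z.abs x + 2 * fact (pred N) < fact N]. *)
Lemma residue_fact_eq (x : Z) N a s t k :
  Z.to_nat (Z.abs x) + 3 <= N -> s <= 2 * fact (pred N) -> a = s + fact N * t ->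
  Z.of_nat a = (x + Z.of_nat (fact N) * k)%Z -> x = Z.of_nat s.
Proof.
  intros HN Hs Ha Hx. apply (Z_congr_small _ _ (Z.of_nat (fact N)) (Z.of_nat t - k)); [|lia].
  destruct N as [|M]; [lia|]. cbn [pred fact] in *. pose proof (lt_O_fact M). nia.
Qed.

Lemma diag_congr (x : Z) N a k :
  Z.to_nat (Z.abs x) + 3 <= N -> diag_nat a -> Z.of_nat a = (x + Z.of_nat (fact N) * k)%Z ->
  diag_set x \/
  exists j M, accepts j M /\ x = Z.of_nat (fact (S j)) /\ N <= halt_clock j M + j + 2.
Proof.
  intros HN Ha Hx. pose proof (residue_fact_eq x N a) as Hres.
  assert (Hsmall : forall m, m < N -> fact m <= fact (pred N)) by (intros; apply fact_le; lia).
  assert (Hzero : x = 0%Z -> diag_set x) by (intros ->; exists 0; split; [|left]; auto).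
  destruct Ha as [->|[[j [-> Hj]]|[j [M [HjM ->]]]]].
  - left. apply Hzero, (Hres 0 0 k); auto; lia.
  - left. destruct (le_lt_dec N (S j)) as [HNj|HjN].
    + destruct (fact_multiple N (S j) HNj) as [t Ht]. apply Hzero, (Hres 0 t k); auto; lia.
    + exists (fact (S j)). split; [|right; left; eauto].
      apply (Hres _ 0 k); auto. specialize (Hsmall _ HjN); lia. lia.
  - set (T := halt_clock j M + j + 2) in *.
    destruct (le_lt_dec N (S j)) as [HNj|HjN].
    + left. destruct (fact_multiple N (S j) HNj) as [t1 Ht1].
      destruct (fact_multiple N T ltac:(lia)) as [t2 Ht2].
      apply Hzero, (Hres 0 (t1 + t2) k); auto; lia.
    + pose proof (Hsmall _ HjN). destruct (le_lt_dec N T) as [HNT|HTN].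
      * right. exists j, M. repeat split; auto.
        destruct (fact_multiple N T HNT) as [t Ht]. apply (Hres _ t k); auto; lia.
      * left. exists (fact (S j) + fact T). split; [|right; right; eauto].
        pose proof (Hsmall _ HTN). apply (Hres _ 0 k); auto; lia.
Qed.

Theorem diag_set_closed : profinite_closed diag_set.
Proof.
  intros x Hx.
  assert (HN : exists N, Z.to_nat (Z.abs x) + 3 <= N /\
     forall j M, accepts j M -> x = Z.of_nat (fact (S j)) -> halt_clock j M + j + 2 < N).
  { destruct (classic (exists j0 M0, accepts j0 M0 /\ x = Z.of_nat (fact (S j0))))
      as [[j0 [M0 [H0 Hx0]]]|Hnone].
    - exists (Z.to_nat (Z.abs x) + halt_clock j0 M0 + j0 + 3). split; [lia|].
      intros j M HjM Hxj. rewrite Hx0 in Hxj. apply Nat2Z.inj, fact_S_inj in Hxj. subst j.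
      rewrite (halt_clock_stable j0 M0 M); auto. lia.
    - exists (Z.to_nat (Z.abs x) + 3). split; [lia|].
      intros j M HjM Hxj. exfalso. apply Hnone. eauto. }
  destruct HN as [N [HxN Hclock]].
  exists x, (Z.of_nat (fact N)). split; [pose proof (lt_O_fact N); lia|]. split.
  - exists 0%Z. lia.
  - intros y [k ->] [a [Ha Hda]].
    destruct (diag_congr x N a k HxN Hda (eq_sym Ha)) as [|[j [M [HjM [Hxj HNj]]]]]; auto.
    specialize (Hclock j M HjM Hxj). lia.
Qed.

Theorem mainTheorem18 :
  exists A : Z -> Prop,
    ~ recursive_set A /\ profinite_closed A /\ recursive_mod_function A.
Proof.
  exists diag_set.
  split; [apply diag_set_not_recursive|].
  split; [apply diag_set_closed | apply diag_set_mod_recursive].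
Qed.
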